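(* Let $p$ be an odd prime and $a,c$ positive integers such that $c$ is a primitive divisor of $p^a-1$. If $\tfrac{p^a-1}{c}$ is odd, then $$g\Big(\tfrac{p^{2a}-1}{2c},\,p^{2a}\Big)=2\,g\Big(\tfrac{p^a-1}{c},\,p^a\Big).$$
   Context: For a prime power $q$ and a positive integer $k$, the Waring number $g(k,q)$ is the smallest $s$ (if it exists) such that every element of $\mathbb{F}_q$ is a sum of $s$ $k$-th powers of elements of $\mathbb{F}_q$. An integer $e$ is a primitive divisor of $p^a-1$ if $e\mid p^a-1$ and $e\nmid p^t-1$ for every $1\le t<a$. *)

From HB Require Import structures.
From mathcomp Require Import all_boot all_order all_algebra all_field.
Set Implicit Arguments. Unset Strict Implicit. Unset Printing Implicit Defensive.
Import GRing.Theory.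
Local Open Scope ring_scope.

Definition sum_of_kth_powers (F : finFieldType) (k s : nat) (x : F) : Prop :=
  exists f : 'I_s -> F, x = \sum_(i < s) f i ^+ k.

Definition waring_ok (F : finFieldType) (k s : nat) : Prop :=
  forall x : F, sum_of_kth_powers k s x.

Definition is_waring_number (F : finFieldType) (k s : nat) : Prop :=
  waring_ok F k s /\ (forall s', waring_ok F k s' -> (s <= s')%N).

Definition primitive_divisor (e p a : nat) : Prop :=
  (e %| p ^ a - 1)%N /\ (forall t, (0 < t)%N -> (t < a)%N -> ~~ (e %| p ^ t - 1)%N).

(* Let q = p^a, k = (q - 1)/c and K = (q^2 - 1)/(2c) = k(q + 1)/2.  Embed F1 into F2
   by phi and pick zeta in F2 with zeta^c = -1.  Since k is odd, zeta^(q-1) = -1, so zeta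
   lies outside phi(F1) and F2 = phi(F1) + zeta phi(F1) is a direct sum.  The nonzero K-th
   powers of F2 are the 2c-th roots of unity, i.e. phi(u) and zeta phi(u) for u a nonzero
   k-th power of F1 (the c-th roots of unity).  Hence x = phi u + zeta phi v is a sum of s
   K-th powers iff u and v are sums of s1 and s2 k-th powers with s1 + s2 = s, which
   doubles the Waring number.  That g(k, q) exists at all is where primitivity of c is
   used. *)

From HB Require Import structures.
From mathcomp Require Import all_boot all_algebra all_field.
From mathcomp Require Import fingroup cyclic boolp ring zify.
Set Implicit Arguments. Unset Strict Implicit. Unset Printing Implicit Defensive.
Import GRing.Theory.
Local Open Scope ring_scope.

Lemma finField_card_pred_gt0 (F : finFieldType) : (0 < #|F|.-1)%N.
Proof. by rewrite -ltnS prednK ?finNzRing_gt1 // (ltn_trans _ (finNzRing_gt1 F)). Qed.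

Lemma finField_unit_pow (F : finFieldType) (x : F) : x != 0 -> x ^+ #|F|.-1 = 1.
Proof.
move=> x0; apply: (mulfI x0); rewrite mulr1 -exprS prednK ?expf_card //.
by apply/card_gt0P; exists 0.
Qed.

Lemma finField_prim_root (F : finFieldType) : exists z : F, #|F|.-1.-primitive_root z.
Proof.
have : has #|F|.-1.-primitive_root (enum (predC1 (0 : F))).
  apply: has_prim_root; rewrite ?enum_uniq -?cardE ?cardC1 ?finField_card_pred_gt0 //.
  by apply/allP => x; rewrite mem_enum => x0; rewrite unity_rootE finField_unit_pow.
by case/hasP => z _; exists z.
Qed.

Lemma finField_unity_rootE (F : finFieldType) n (x : F) : (n %| #|F|.-1)%N -> x != 0 ->
  x ^+ n = 1 <-> exists y, x = y ^+ (#|F|.-1 %/ n).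
Proof.
move=> n_dvd x0; have N_gt0 := finField_card_pred_gt0 F.
have n_gt0 : (0 < n)%N := dvdn_gt0 N_gt0 n_dvd.
have m_gt0 : (0 < #|F|.-1 %/ n)%N by rewrite divn_gt0 // dvdn_leq.
have N_eq : #|F|.-1 = (#|F|.-1 %/ n * n)%N by rewrite divnK.
split=> [xn1 | [y x_eq]]; last first.
  have y0 : y != 0 by apply: contraNneq x0 => y0; rewrite x_eq y0 expr0n gtn_eqF.
  by rewrite x_eq -exprM -N_eq finField_unit_pow.
have [theta theta_prim] := finField_prim_root F.
have [i x_eq] := prim_rootP theta_prim (finField_unit_pow x0).
have : (#|F|.-1 %| i * n)%N by rewrite (prim_order_dvd theta_prim) exprM -x_eq xn1.
rewrite {1}N_eq dvdn_pmul2r // => /dvdnP[j i_eq].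
by exists (theta ^+ j); rewrite x_eq i_eq exprM.
Qed.

Lemma prim_root_dvd_card (F : finFieldType) (S : {set F}) n w :
  n.-primitive_root w -> 0 \notin S -> {in S, forall x, w * x \in S} -> (n %| #|S|)%N.
Proof.
move=> w_prim S0 wS.
have w0 : w != 0 by rewrite (prim_root_eq0 w_prim) -lt0n (prim_order_gt0 w_prim).
have wS_eq : [set w * x | x in S] = S.
  apply/eqP; rewrite eqEcard card_imset; last exact: mulfI.
  by rewrite leqnn andbT; apply/subsetP => _ /imsetP[x xS ->]; apply: wS.
have prodS0 : \prod_(x in S) x != 0.
  by apply/prodf_neq0 => x xS; apply: contraNneq S0 => <-.
rewrite (prim_order_dvd w_prim); apply/eqP/(mulIf prodS0).
rewrite mul1r -prodr_const -big_split /=.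
by rewrite -(big_imset id (in2W (mulfI w0))) /= wS_eq.
Qed.

Section SumsOfPowers.
Variables (F : finFieldType) (k : nat).
Implicit Types (s t : nat) (x y : F).

Lemma sum_kth_powers0 s : (0 < k)%N -> sum_of_kth_powers k s (0 : F).
Proof. by move=> k_gt0; exists (fun=> 0); rewrite big1 // => i _; rewrite expr0n gtn_eqF. Qed.

Lemma sum_kth_powers_expr y : sum_of_kth_powers k 1 (y ^+ k).
Proof. by exists (fun=> y); rewrite big_ord1. Qed.

Lemma sum_kth_powersD s t x y :
  sum_of_kth_powers k s x -> sum_of_kth_powers k t y -> sum_of_kth_powers k (s + t) (x + y).
Proof.
move=> [f ->] [g ->]; exists (fun i => match split i with inl j => f j | inr j => g j end).
rewrite big_split_ord; congr (_ + _); apply: eq_bigr => j _.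
  by rewrite -/(unsplit (inl j)) unsplitK.
by rewrite -/(unsplit (inr j)) unsplitK.
Qed.

Lemma sum_kth_powersW s t x :
  (0 < k)%N -> (s <= t)%N -> sum_of_kth_powers k s x -> sum_of_kth_powers k t x.
Proof.
move=> k_gt0 le_st sx; rewrite -(subnKC le_st) -[x]addr0.
by apply: sum_kth_powersD => //; apply: sum_kth_powers0.
Qed.

Lemma sum_kth_powersSr s x : sum_of_kth_powers k s.+1 x ->
  exists y z, sum_of_kth_powers k s y /\ x = y + z ^+ k.
Proof.
move=> [f ->]; rewrite big_ord_recr /=.
by exists (\sum_(i < s) f (widen_ord (leqnSn s) i) ^+ k), (f ord_max); split=> //; eexists.
Qed.

Lemma sum_kth_powersMl s y x :
  sum_of_kth_powers k s x -> sum_of_kth_powers k s (y ^+ k * x).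
Proof.
move=> [f ->]; exists (fun i => y * f i).
by rewrite mulr_sumr; apply: eq_bigr => i _; rewrite exprMn.
Qed.

End SumsOfPowers.

Lemma sum_kth_powers_morph (F1 F2 : finFieldType) (h : F1 -> F2) k K s x :
  h 0 = 0 -> {morph h : u v / u + v} -> (forall w, exists z, h (w ^+ k) = z ^+ K) ->
  sum_of_kth_powers k s x -> sum_of_kth_powers K s (h x).
Proof.
move=> h0 hD hpow [f ->]; have [z hz] := fin_all_exists (fun i => hpow (f i)).
by exists z; rewrite (big_morph h hD h0); apply: eq_bigr => i _; apply: hz.
Qed.

Lemma waring_number_exists (F : finFieldType) k : (0 < k)%N ->
  (forall x : F, exists s, sum_of_kth_powers k s x) -> exists g, is_waring_number F k g.
Proof.
move=> k_gt0 /fin_all_exists[s sP].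
have ok : exists n, `[< waring_ok F k n >].
  exists (\max_(x : F) s x); apply/asboolP => x.
  exact: sum_kth_powersW (leq_bigmax x) (sP x).
exists (ex_minn ok); case: ex_minnP => g /asboolP g_ok g_min.
by split=> // n /asboolP /g_min.
Qed.

Definition kth_power_sums (F : finFieldType) k : {set F} :=
  [set x | `[< exists s, sum_of_kth_powers k s x >]].

Lemma kth_power_sumsP (F : finFieldType) k (x : F) :
  reflect (exists s, sum_of_kth_powers k s x) (x \in kth_power_sums F k).
Proof. by rewrite inE; apply: asboolP. Qed.

Lemma kth_power_sums0 (F : finFieldType) k : (0 < k)%N -> (0 : F) \in kth_power_sums F k.
Proof. by move=> k_gt0; apply/kth_power_sumsP; exists 0%N; apply: sum_kth_powers0. Qed.

Lemma kth_power_sumsD (F : finFieldType) k (x y : F) :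
  x \in kth_power_sums F k -> y \in kth_power_sums F k -> x + y \in kth_power_sums F k.
Proof.
move=> /kth_power_sumsP[s sx] /kth_power_sumsP[t ty]; apply/kth_power_sumsP.
by exists (s + t)%N; apply: sum_kth_powersD.
Qed.

Lemma group_set_kth_power_sums (F : finFieldType) k :
  (0 < k)%N -> group_set (kth_power_sums F k).
Proof.
move=> k_gt0; apply/group_setP.
by split; [exact: (kth_power_sums0 F k_gt0) | exact: (@kth_power_sumsD F k)].
Qed.

(* The nonzero sums of k-th powers are permuted by a primitive c-th root of unity and
   form an additive subgroup, so c divides p^t - 1 where p^t is their number; as c is a
   primitive divisor this forces t = a. *)
Lemma kth_power_sums_cover (F : finFieldType) p a c :
  prime p -> #|F| = (p ^ a)%N -> primitive_divisor c p a ->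
  forall x : F, exists s, sum_of_kth_powers ((p ^ a - 1) %/ c) s x.
Proof.
move=> p_pr cardF [c_dvd c_prim]; set k := ((p ^ a - 1) %/ c)%N.
have q1_gt0 : (0 < p ^ a - 1)%N by rewrite subn_gt0 -cardF finNzRing_gt1.
have c_gt0 : (0 < c)%N := dvdn_gt0 q1_gt0 c_dvd.
have k_gt0 : (0 < k)%N by rewrite divn_gt0 // dvdn_leq.
pose R := kth_power_sums F k.
have R0 : (0 : F) \in R := kth_power_sums0 F k_gt0.
have R1 : (1 : F) \in R.
  by apply/kth_power_sumsP; exists 1%N; rewrite -(expr1n F k); apply: sum_kth_powers_expr.
have /(dvdn_pfactor _ _ p_pr)[t le_ta cardR] : (#|R| %| p ^ a)%N.
  rewrite -cardF -cardsT.
  exact: (cardSg (G := [set: F]%G) (H := Group (group_set_kth_power_sums F k_gt0))) (subsetT _).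
have [theta theta_prim] := finField_prim_root F.
have w_prim : c.-primitive_root (theta ^+ k).
  by rewrite /k -cardF subn1; apply: dvdn_prim_root; rewrite // cardF -subn1.
have c_dvd_R : (c %| #|R :\ 0%R|)%N.
  apply: (prim_root_dvd_card w_prim) => [|x]; first by rewrite setD11.
  rewrite !in_setD1 => /andP[x0 /kth_power_sumsP[s sx]].
  have w0 : theta ^+ k != 0 by rewrite (prim_root_eq0 w_prim) -lt0n.
  rewrite mulf_neq0 //=.
  by apply/kth_power_sumsP; exists s; apply: sum_kth_powersMl.
have cardR1 : #|R :\ 0%R| = (p ^ t - 1)%N by rewrite -cardR (cardsD1 0 R) R0 add1n subn1.
have t_gt0 : (0 < t)%N.
  rewrite lt0n; apply: contraTneq R1 => t0; move: cardR1; rewrite t0 subnn => /eqP.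
  by rewrite cards_eq0 => /eqP R'0; rewrite -(setD1K R0) R'0 setU0 inE oner_eq0.
have t_eq_a : t = a.
  apply/eqP; rewrite eqn_leq le_ta leqNgt; apply/negP => /(c_prim t t_gt0).
  by rewrite -cardR1 c_dvd_R.
have R_full : R = [set: F].
  by apply/eqP; rewrite eqEcard subsetT cardR t_eq_a -cardF cardsT leqnn.
by move=> x; apply/kth_power_sumsP; rewrite -/R R_full inE.
Qed.

Lemma rmorph_factor (R A B : nzRingType) (f : {rmorphism R -> A}) (g : {rmorphism R -> B}) :
  (forall a, exists r, f r = a) -> (forall r, f r = 0 -> g r = 0) ->
  inhabited {rmorphism A -> B}.
Proof.
move=> f_onto ker_fg.
have f_onto_eq a : exists r, f r == a by have [r <-] := f_onto a; exists r.
pose h a := g (xchoose (f_onto_eq a)).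
have hE r : h (f r) = g r.
  apply/eqP; rewrite -subr_eq0 -rmorphB; apply/eqP/ker_fg.
  by rewrite rmorphB (eqP (xchooseP (f_onto_eq _))) subrr.
have h_zmod : zmod_morphism h.
  move=> a b; have [[r <-] [s <-]] := (f_onto a, f_onto b).
  by rewrite -rmorphB !hE rmorphB.
have h_monoid : monoid_morphism h.
  split=> [|a b]; first by rewrite -(rmorph1 f) hE rmorph1.
  have [[r <-] [s <-]] := (f_onto a, f_onto b).
  by rewrite -rmorphM !hE rmorphM.
pose hZ := GRing.isZmodMorphism.Build _ _ h h_zmod.
pose hM := GRing.isMonoidMorphism.Build _ _ h h_monoid.
by constructor; exact: (HB.pack h hZ hM).
Qed.

(* theta |-> eta, for theta a generator of F1^* and eta a root in F2 of the minimal polynomial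
   of theta over 'F_p, which divides X^|F2| - X and hence splits in F2. *)
Lemma finField_embedding (p : nat) (F1 F2 : finFieldType) :
  p \in [pchar F1] -> p \in [pchar F2] -> (forall x : F1, x ^+ #|F2| = x) ->
  inhabited {rmorphism F1 -> F2}.
Proof.
move=> pF1 pF2 fixF1; pose L1 := pPrimeCharType pF1; pose L2 := pPrimeCharType pF2.
have [theta theta_prim] := finField_prim_root F1.
pose ev1 : {rmorphism {poly 'F_p} -> L1} := horner_alg (theta : L1).
have [mq Dmq] := polyOver1P (minPolyOver 1 (theta : L1)).
have ker_ev1 P : ev1 P = 0 -> mq %| P.
  move=> ev1P0; rewrite -(dvdp_map (in_alg L1)) -Dmq.
  by apply: minPoly_dvdp; [exact: alg_polyOver | exact/rootP].
have mq_dvd : mq %| 'X^#|F2| - 'X.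
  by apply: ker_ev1; rewrite rmorphB rmorphXn /= horner_algX fixF1 subrr.
have [eta eta_root] : exists eta : L2, root (map_poly (in_alg L2) mq) eta.
  have : map_poly (in_alg L2) mq %| \prod_(x : L2) ('X - x%:P).
    rewrite -finField_genPoly -(map_polyXn (in_alg L2)) -(map_polyX (in_alg L2)).
    by rewrite -rmorphB dvdp_map.
  case/dvdp_prod_XsubC => m; case: (mask m _) => [|eta s]; rewrite ?big_nil ?big_cons => Dm.
    move: Dm; rewrite -size_poly_eq1 size_map_poly -(size_map_poly (in_alg L1)) -Dmq.
    by rewrite size_minPoly.
  by exists eta; rewrite (eqp_root Dm) rootM root_XsubC eqxx.
apply: (rmorph_factor (f := ev1) (g := horner_alg eta)) => [x | P /ker_ev1/dvdpP[Q ->]].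
  have [-> | x0] := eqVneq x 0; first by exists 0; rewrite rmorph0.
  have [i ->] := prim_rootP theta_prim (finField_unit_pow x0).
  by exists 'X^i; rewrite rmorphXn /= horner_algX.
by rewrite rmorphM /= [horner_alg eta mq](rootP eta_root) mulr0.
Qed.

Section QuadraticExtensionPowers.
Variables (F1 F2 : finFieldType) (phi : {rmorphism F1 -> F2}) (c k K : nat).
Hypotheses (card_F2 : #|F2| = (#|F1| * #|F1|)%N) (card_F1 : #|F1|.-1 = (c * k)%N).
Hypotheses (k_odd : odd k) (kK : (k * #|F1|.+1)%N = (2 * K)%N) (two_neq0 : 2%:R != 0 :> F2).

Let card_F2_pred : #|F2|.-1 = (2 * c * K)%N.
Proof.
rewrite card_F2 -mulnA mulnCA -kK mulnA -card_F1.
by case: #|F1| => [|q] //; rewrite -pred_Sn mulSnr !mulnSr addnS.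
Qed.

Let c_gt0 : (0 < c)%N.
Proof. by have := finField_card_pred_gt0 F1; rewrite card_F1 muln_gt0 => /andP[]. Qed.

Let k_gt0 : (0 < k)%N.
Proof. by have := finField_card_pred_gt0 F1; rewrite card_F1 muln_gt0 => /andP[]. Qed.

Let K_gt0 : (0 < K)%N.
Proof. by rewrite -(ltn_pmul2l (isT : 0 < 2)%N) -kK muln0 muln_gt0 k_gt0. Qed.

Lemma unity_root_image y : y ^+ c = 1 -> exists w, y = phi (w ^+ k).
Proof.
move=> yc1.
have [theta theta_prim] := finField_prim_root F1.
have phi_prim : #|F1|.-1.-primitive_root (phi theta) by rewrite fmorph_primitive_root.
have y_pow : y ^+ #|F1|.-1 = 1 by rewrite card_F1 exprM yc1 expr1n.
have [i y_eq] := prim_rootP phi_prim y_pow; rewrite -rmorphXn in y_eq.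
have c_dvd : (c %| #|F1|.-1)%N by rewrite card_F1 dvdn_mulr.
have theta_i0 : theta ^+ i != 0.
  by rewrite expf_neq0 // (prim_root_eq0 theta_prim) -lt0n finField_card_pred_gt0.
have [|w w_eq] := (finField_unity_rootE c_dvd theta_i0).1.
  by apply: (fmorph_inj phi); rewrite rmorphXn rmorph1 -y_eq.
by exists w; rewrite y_eq w_eq card_F1 mulKn ?c_gt0.
Qed.

Lemma exists_root_neg1 : exists zeta : F2, zeta ^+ c = -1.
Proof.
have kq_gt0 : (0 < k * #|F1|.+1)%N by rewrite muln_gt0 k_gt0.
have kq_dvd : (k * #|F1|.+1 %| #|F2|.-1)%N by rewrite card_F2_pred -mulnA mulnCA -kK dvdn_mull.
have neg1_neq0 : -1 != 0 :> F2 by rewrite oppr_eq0 oner_eq0.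
have [|zeta] := (finField_unity_rootE kq_dvd neg1_neq0).1.
  by rewrite kK exprM sqrrN !expr1n.
by rewrite card_F2_pred -mulnA mulnCA -kK mulnK // => ->; exists zeta.
Qed.

Let phi_kth_power_root w : w != 0 -> phi (w ^+ k) ^+ c = 1.
Proof. by move=> w0; rewrite -rmorphXn -exprM mulnC -card_F1 finField_unit_pow ?rmorph1. Qed.

Variable zeta : F2.
Hypothesis zeta_c : zeta ^+ c = -1.

Let zeta_neq0 : zeta != 0.
Proof.
apply: contra_eq_neq zeta_c => ->.
by rewrite expr0n gtn_eqF ?c_gt0 // eq_sym oppr_eq0 oner_eq0.
Qed.

Lemma zeta_notin_image u : zeta != phi u.
Proof.
apply/eqP => zeta_eq.
have u0 : u != 0 by apply: contraNneq zeta_neq0 => u0; rewrite zeta_eq u0 rmorph0.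
have : zeta ^+ #|F1|.-1 = 1 by rewrite zeta_eq -rmorphXn finField_unit_pow ?rmorph1.
rewrite card_F1 exprM zeta_c -signr_odd k_odd expr1 => /eqP.
by rewrite eq_sym -addr_eq0 -mulr2n (negPf two_neq0).
Qed.

Lemma Kth_powersE z :
  (exists y, z = y ^+ K) <-> exists w, z = phi (w ^+ k) \/ z = zeta * phi (w ^+ k).
Proof.
have [-> | z0] := eqVneq z 0.
  split=> _; [exists 0; left | exists 0]; rewrite expr0n gtn_eqF ?K_gt0 ?k_gt0 //.
  by rewrite rmorph0.
have K_dvd : (2 * c %| #|F2|.-1)%N by rewrite card_F2_pred dvdn_mulr.
have -> : K = (#|F2|.-1 %/ (2 * c))%N by rewrite card_F2_pred mulKn // muln_gt0 c_gt0.
apply: iff_trans (iff_sym (finField_unity_rootE K_dvd z0)) _.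
rewrite mulnC exprM; split=> [/eqP | [w z_eq]].
  rewrite sqrf_eq1 => /orP[/eqP/unity_root_image[w ->] | /eqP zc]; first by exists w; left.
  have [|w z_eq] := unity_root_image (_ : (z / zeta) ^+ c = 1).
    by rewrite expr_div_n zc zeta_c divff // oppr_eq0 oner_eq0.
  by exists w; right; rewrite -z_eq mulrC divfK ?zeta_neq0.
have w0 : w != 0.
  by apply: contraNneq z0 => w0; case: z_eq => ->; rewrite w0 expr0n gtn_eqF ?rmorph0 ?mulr0.
by case: z_eq => ->; rewrite ?exprMn phi_kth_power_root // ?zeta_c ?sqrrN !expr1n ?mulr1.
Qed.
End QuadraticExtensionPowers.

Section QuadraticExtensionWaring.
Variables (F1 F2 : finFieldType) (phi : {rmorphism F1 -> F2}) (k K : nat) (zeta : F2).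
Hypotheses (k_gt0 : (0 < k)%N) (card_F2 : #|F2| = (#|F1| * #|F1|)%N).
Hypothesis zeta_notin_image : forall u, zeta != phi u.
Hypothesis Kth_powersE : forall z : F2,
  (exists y, z = y ^+ K) <-> exists w, z = phi (w ^+ k) \/ z = zeta * phi (w ^+ k).

Lemma decomp_inj u v u' v' :
  phi u + zeta * phi v = phi u' + zeta * phi v' -> u = u' /\ v = v'.
Proof.
case: (eqVneq v v') => [<- | neq_v] eq_uv.
  by split=> //; apply: (fmorph_inj phi); exact: (addIr _ eq_uv).
have /negP[] := zeta_notin_image ((u' - u) / (v - v')).
have phi_v_neq0 : phi v - phi v' != 0 by rewrite -rmorphB fmorph_eq0 subr_eq0.
rewrite fmorph_div !rmorphB; apply/eqP/(mulIf phi_v_neq0); rewrite divfK //.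
have -> : zeta * (phi v - phi v') = phi u + zeta * phi v - (phi u + zeta * phi v') by ring.
by rewrite eq_uv; ring.
Qed.

Lemma decomp_exists x : exists u v, x = phi u + zeta * phi v.
Proof.
pose f (uv : F1 * F1) := phi uv.1 + zeta * phi uv.2.
have f_inj : injective f by move=> [u v] [u' v'] /decomp_inj[/= -> ->].
have := inj_card_onto f_inj _ x; rewrite card_prod card_F2 leqnn => /(_ isT).
by case/codomP => -[u v] ->; exists u, v.
Qed.

Lemma sum_Kth_powers_decomp s x : sum_of_kth_powers K s x <->
  exists s1 s2 u v, [/\ (s1 + s2)%N = s, sum_of_kth_powers k s1 u,
                        sum_of_kth_powers k s2 v & x = phi u + zeta * phi v].
Proof.
split=> [|[s1 [s2 [u [v [<- su sv ->]]]]]]; last first.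
  have phi_pow w : exists z, phi (w ^+ k) = z ^+ K.
    by have [|z ->] := (Kth_powersE (phi (w ^+ k))).2; [exists w; left | exists z].
  have zeta_phi_pow w : exists z, zeta * phi (w ^+ k) = z ^+ K.
    by have [|z ->] := (Kth_powersE (zeta * phi (w ^+ k))).2; [exists w; right | exists z].
  apply: sum_kth_powersD; first exact: sum_kth_powers_morph (rmorph0 phi) (rmorphD phi) phi_pow su.
  apply: (sum_kth_powers_morph (h := fun v => zeta * phi v)) zeta_phi_pow sv.
    by rewrite rmorph0 mulr0.
  by move=> v1 v2; rewrite rmorphD mulrDr.
elim: s x => [|s IHs] x.
  move=> [f ->]; rewrite big_ord0; exists 0%N, 0%N, 0, 0.
  by rewrite !rmorph0 mulr0 addr0; split=> //; apply: sum_kth_powers0.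
case/sum_kth_powersSr => y [z [sy ->]].
have [s1 [s2 [u [v [<- su sv ->]]]]] := IHs y sy.
have [w [zK | zK]] := (Kth_powersE (z ^+ K)).1 (ex_intro _ z erefl).
  exists s1.+1, s2, (u + w ^+ k), v; split; rewrite ?addSn //.
    by rewrite -addn1; apply: sum_kth_powersD su (sum_kth_powers_expr _ _).
  by rewrite zK rmorphD; ring.
exists s1, s2.+1, u, (v + w ^+ k); split; rewrite ?addnS //.
  by rewrite -addn1; apply: sum_kth_powersD sv (sum_kth_powers_expr _ _).
by rewrite zK rmorphD; ring.
Qed.

Lemma waring_ok_double g : waring_ok F1 k g -> waring_ok F2 K (g + g).
Proof.
move=> F1_ok x; have [u [v ->]] := decomp_exists x.
by apply/sum_Kth_powers_decomp; exists g, g, u, v.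
Qed.

(* By uniqueness of the decomposition of phi u + zeta phi u, both parts of a representation
   by s K-th powers represent u; the shorter one uses at most s/2 k-th powers. *)
Lemma waring_ok_half s : waring_ok F2 K s -> waring_ok F1 k s./2.
Proof.
move=> F2_ok u; have := F2_ok (phi u + zeta * phi u).
case/sum_Kth_powers_decomp => s1 [s2 [u1 [u2 [<- su1 su2 /decomp_inj[-> u_eq]]]]].
have [le_s1 | lt_s1] := leqP s1 (s1 + s2)./2; first exact: sum_kth_powersW le_s1 su1.
by rewrite u_eq; apply: sum_kth_powersW su2; rewrite -leq_double -!muln2; lia.
Qed.

Lemma waring_number_double g : is_waring_number F1 k g -> is_waring_number F2 K (2 * g).
Proof.
move=> [F1_ok g_min]; split=> [|s /waring_ok_half /g_min le_g].
  by rewrite mul2n -addnn; apply: waring_ok_double.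
by rewrite -(leq_double _ s) -!muln2 in le_g *; lia.
Qed.

End QuadraticExtensionWaring.

Lemma waring_exponents q c : odd q -> (0 < c)%N -> (c %| q - 1)%N ->
  ((q - 1) %/ c * q.+1 = 2 * ((q * q - 1) %/ (2 * c)))%N.
Proof.
move=> q_odd c_gt0 c_dvd; set k := ((q - 1) %/ c)%N; set h := q.+1./2.
have q1_eq : (q - 1 = k * c)%N by rewrite divnK.
have q2_eq : q.+1 = (2 * h)%N by rewrite -[in LHS](odd_double_half q.+1) /= q_odd mul2n.
have -> : (q * q - 1 = 2 * c * (k * h))%N by nia.
by rewrite mulKn ?muln_gt0 // q2_eq; lia.
Qed.

Theorem mainTheorem8 (p a c : nat) (F1 F2 : finFieldType) :
  prime p -> odd p -> (0 < a)%N -> (0 < c)%N ->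
  primitive_divisor c p a ->
  odd ((p ^ a - 1) %/ c) ->
  #|F1| = (p ^ a)%N -> #|F2| = (p ^ (2 * a))%N ->
  exists g : nat,
    is_waring_number F1 ((p ^ a - 1) %/ c) g /\
    is_waring_number F2 ((p ^ (2 * a) - 1) %/ (2 * c)) (2 * g).
Proof.
move=> p_pr p_odd _ c_gt0 c_prim k_odd card_F1 card_F2.
set k := ((p ^ a - 1) %/ c)%N in k_odd *; set K := ((p ^ (2 * a) - 1) %/ (2 * c))%N.
have pF1 := card_finPcharP card_F1 p_pr; have pF2 := card_finPcharP card_F2 p_pr.
have p2a : (p ^ (2 * a) = p ^ a * p ^ a)%N by rewrite -expnD addnn -mul2n.
have card_F2_sq : #|F2| = (#|F1| * #|F1|)%N by rewrite card_F2 card_F1 p2a.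
have card_F1_pred : #|F1|.-1 = (c * k)%N by rewrite card_F1 -subn1 mulnC divnK //; case: c_prim.
have k_gt0 : (0 < k)%N.
  by move: (finField_card_pred_gt0 F1); rewrite card_F1_pred muln_gt0 => /andP[].
have kK : (k * #|F1|.+1 = 2 * K)%N.
  by rewrite card_F1 /K p2a waring_exponents ?oddX ?p_odd ?orbT //; case: c_prim.
have two_neq0 : 2%:R != 0 :> F2.
  by rewrite -(dvdn_pcharf pF2) dvdn_prime2 //; apply: contraTneq p_odd => ->.
have fix_F1 (x : F1) : x ^+ #|F2| = x by rewrite card_F2_sq exprM !expf_card.
have [phi] := finField_embedding pF1 pF2 fix_F1.
have [g g_waring] := waring_number_exists k_gt0 (kth_power_sums_cover p_pr card_F1 c_prim).
have [zeta zeta_c] := exists_root_neg1 card_F2_sq card_F1_pred kK.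
exists g; split=> //.
apply: (waring_number_double (phi := phi) (zeta := zeta) k_gt0 card_F2_sq) g_waring.
  exact: (zeta_notin_image phi card_F1_pred k_odd two_neq0 zeta_c).
by move=> z; apply: (Kth_powersE phi card_F2_sq card_F1_pred kK zeta_c).
Qed.
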